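(* Let $\mathcal{J}\neq\emptyset$ be a countable set, $\{e_{j,k}:j\in\mathcal{J},k\in\mathbb{N}_0\}$ an orthonormal basis of $\mathcal{H}$, and $\{w_{j,k}\}\subseteq\mathbb{C}$ a bounded family. Define $B\in\mathcal{B}(\mathcal{H})$ by $Be_{j,0}=0$ and $Be_{j,k}=w_{j,k-1}e_{j,k-1}$ for $k\ge1$. Then: (i) if no weight is zero, $B$ is cyclic; (ii) if no weight is zero and there is $g\in\bigcap_{n\ge1}\operatorname{ran}(B^n)$ such that for each $j\in\mathcal{J}$ we have $\langle g,e_{j,k}\rangle\neq0$ for infinitely many $k$, then $B$ has a cyclic vector belonging to $\bigcap_{n\ge1}\operatorname{ran}(B^n)$; (iii) $B$ is cyclic if and only if at most one weight $w_{j,k}$ is zero.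
   Context: An operator $T$ is cyclic if there is $h$ (a cyclic vector) with $\bigvee\{T^nh:n\in\mathbb{N}_0\}=\mathcal{H}$. *)

(* classical reals. The Hilbert space H with orthonormal basis
   {e_{j,k}} is modelled concretely by its coordinates: H = l^2(J x N_0),
   e_{j,k} = indicator of (j,k), <x, e_{j,k}> = x j k. *)
From Stdlib Require Import Reals List.
Open Scope R_scope.

Definition Cx := (R * R)%type.
Definition C0 : Cx := (0, 0).
Definition Cadd (a b : Cx) : Cx := (fst a + fst b, snd a + snd b).
Definition Csub (a b : Cx) : Cx := (fst a - fst b, snd a - snd b).
Definition Cmul (a b : Cx) : Cx :=
  (fst a * fst b - snd a * snd b, fst a * snd b + snd a * fst b).
Definition Cnorm2 (a : Cx) : R := fst a * fst a + snd a * snd a.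

Definition vec (J : Type) := J -> nat -> Cx.

Definition psum {J : Type} (x : vec J) (L : list (J * nat)) : R :=
  fold_right Rplus 0 (map (fun p => Cnorm2 (x (fst p) (snd p))) L).

Definition in_l2 {J : Type} (x : vec J) : Prop :=
  exists M : R, forall L : list (J * nat), NoDup L -> psum x L <= M.

Definition norm2_le {J : Type} (x : vec J) (eps : R) : Prop :=
  forall L : list (J * nat), NoDup L -> psum x L <= eps.

Definition vsub {J : Type} (x y : vec J) : vec J := fun j k => Csub (x j k) (y j k).

(* The weighted backward shift: B e_{j,0} = 0, B e_{j,k+1} = w_{j,k} e_{j,k};
   in coordinates (B x)_{j,k} = w_{j,k} x_{j,k+1}. *)
Definition Bop {J : Type} (w : J -> nat -> Cx) (x : vec J) : vec J :=
  fun j k => Cmul (w j k) (x j (S k)).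

(* p(B) h for p = c_0 + c_1 X + ... (coefficient list, Horner scheme) *)
Fixpoint polyB {J : Type} (w : J -> nat -> Cx) (cs : list Cx) (h : vec J) : vec J :=
  match cs with
  | nil => fun _ _ => C0
  | c :: cs' => fun j k => Cadd (Cmul c (h j k)) (Bop w (polyB w cs' h) j k)
  end.

Definition cyclic_vector {J : Type} (w : J -> nat -> Cx) (h : vec J) : Prop :=
  in_l2 h /\
  forall y : vec J, in_l2 y -> forall eps : R, 0 < eps ->
    exists cs : list Cx, norm2_le (vsub y (polyB w cs h)) eps.

Definition cyclic {J : Type} (w : J -> nat -> Cx) : Prop :=
  exists h : vec J, cyclic_vector w h.

Definition in_ran_pow {J : Type} (w : J -> nat -> Cx) (n : nat) (g : vec J) : Prop :=
  exists x : vec J, in_l2 x /\ g = Nat.iter n (Bop w) x.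

Definition in_all_ran {J : Type} (w : J -> nat -> Cx) (g : vec J) : Prop :=
  forall n : nat, (1 <= n)%nat -> in_ran_pow w n g.

(* The cyclic vector is supported on sparse sites (j_m, N_m), m = 0, 1, ...,
   where every row j recurs infinitely often and N_{m+1} - N_m = m + 1; its
   squared coefficients d_m decay fast compared with the weights.  To reach
   e_{j,k}, take a far site m in row j and apply c B^(N_m - k): site m lands on
   (j, k), earlier sites are annihilated, and later sites contribute O(2^-m).
   The same decay lets B^n x = h be solved in l^2.  A single zero weight
   w_{jz,K-1} is handled by adding e_{jz,K-1} and starting at N_0 = K.  Two zero
   weights at p <> q force the (p, q) coordinates of every p(B) h to be a
   multiple of (h_p, h_q), so nothing is cyclic. *)

From Stdlib Require Import Reals List Lia Lra ClassicalEpsilon FunctionalExtensionality.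
Open Scope R_scope.

Local Notation decide := excluded_middle_informative.

Ltac Cx_ring := apply injective_projections; unfold Cadd, Csub, Cmul, C0; simpl; ring.

Lemma Cnorm2_ge0 (a : Cx) : 0 <= Cnorm2 a.
Proof. unfold Cnorm2. nra. Qed.

Lemma Cnorm2_mul (a b : Cx) : Cnorm2 (Cmul a b) = Cnorm2 a * Cnorm2 b.
Proof. unfold Cnorm2, Cmul; simpl. ring. Qed.

Lemma Cnorm2_C0 : Cnorm2 C0 = 0.
Proof. unfold Cnorm2, C0; simpl; ring. Qed.

Lemma Cnorm2_eq0 (a : Cx) : Cnorm2 a = 0 -> a = C0.
Proof.
  destruct a as [x y]; unfold Cnorm2, C0; simpl; intro H.
  assert (x = 0) by nra. assert (y = 0) by nra. subst; reflexivity.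
Qed.

Lemma Cnorm2_gt0 (a : Cx) : a <> C0 -> 0 < Cnorm2 a.
Proof.
  intro H. destruct (Cnorm2_ge0 a); auto. exfalso; apply H, Cnorm2_eq0; auto.
Qed.

Lemma Cnorm2_add_le (a b : Cx) : Cnorm2 (Cadd a b) <= 2 * Cnorm2 a + 2 * Cnorm2 b.
Proof.
  destruct a as [x y], b as [u v]; unfold Cnorm2, Cadd; simpl.
  pose proof (pow2_ge_0 (x - u)); pose proof (pow2_ge_0 (y - v)). nra.
Qed.

Lemma Cmul_neq0 (a b : Cx) : a <> C0 -> b <> C0 -> Cmul a b <> C0.
Proof.
  intros Ha Hb E. pose proof (Cnorm2_gt0 a Ha). pose proof (Cnorm2_gt0 b Hb).
  assert (Cnorm2 (Cmul a b) = 0) by (rewrite E; apply Cnorm2_C0).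
  rewrite Cnorm2_mul in H1. nra.
Qed.

Definition Cinv (a : Cx) : Cx := (fst a / Cnorm2 a, - snd a / Cnorm2 a).

Lemma Cmul_Cinv (a : Cx) : a <> C0 -> Cmul a (Cinv a) = (1, 0).
Proof.
  intro H. pose proof (Cnorm2_gt0 a H) as P. destruct a as [x y].
  unfold Cmul, Cinv, Cnorm2 in *; simpl in *. apply injective_projections; simpl; field; lra.
Qed.

Lemma Cnorm2_Cinv (a : Cx) : a <> C0 -> Cnorm2 (Cinv a) = / Cnorm2 a.
Proof.
  intro H. pose proof (Cnorm2_gt0 a H) as P. destruct a as [x y].
  unfold Cinv, Cnorm2 in *; simpl in *. field; lra.
Qed.

Lemma Cnorm2_sqrt (d : R) : 0 <= d -> Cnorm2 (sqrt d, 0) = d.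
Proof. intro H. unfold Cnorm2; simpl. rewrite sqrt_sqrt; lra. Qed.

Lemma sqrt_neq_C0 (d : R) : 0 < d -> (sqrt d, 0) <> C0.
Proof. intros H E. inversion E. pose proof (sqrt_lt_R0 d H). lra. Qed.

Lemma Cnorm2_quotient (W W' : Cx) (d d' : R) : W <> C0 -> 0 < d -> 0 < d' ->
  Cnorm2 (Csub C0 (Cmul (Cinv (Cmul W (sqrt d, 0))) (Cmul W' (sqrt d', 0))))
  = Cnorm2 W' * d' / (Cnorm2 W * d).
Proof.
  intros HW Hd Hd'. pose proof (Cnorm2_gt0 W HW).
  assert (HWs : Cmul W (sqrt d, 0) <> C0) by (apply Cmul_neq0; auto; apply sqrt_neq_C0; auto).
  replace (Csub C0 _) with (Cmul (Cmul (-1, 0) (Cinv (Cmul W (sqrt d, 0)))) (Cmul W' (sqrt d', 0)))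
    by Cx_ring.
  rewrite !Cnorm2_mul, Cnorm2_Cinv, Cnorm2_mul, !Cnorm2_sqrt by (auto; lra).
  replace (Cnorm2 (-1, 0)) with 1 by (unfold Cnorm2; simpl; ring). field. lra.
Qed.

(* No single scalar multiple of (a, b) comes close to the target (u, v) =
   (conj (-b), conj a), which is orthogonal to (a, b). *)
Lemma Cx_pair_far_from_line (a b : Cx) : exists u v delta, 0 < delta /\
  forall c, delta <= Cnorm2 (Csub u (Cmul c a)) + Cnorm2 (Csub v (Cmul c b)).
Proof.
  destruct (decide (a = C0 /\ b = C0)) as [[-> ->]|Hab].
  - exists (1, 0), C0, 1. split; [lra|]. intro c.
    pose proof (Cnorm2_ge0 (Csub C0 (Cmul c C0))).
    replace (Cnorm2 (Csub (1, 0) (Cmul c C0))) with 1; [lra|].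
    unfold Cnorm2, Csub, Cmul, C0; simpl; ring.
  - assert (Hpos : 0 < Cnorm2 a + Cnorm2 b).
    { pose proof (Cnorm2_ge0 a); pose proof (Cnorm2_ge0 b).
      destruct (decide (a = C0)) as [->|Ha].
      + assert (b <> C0) by tauto. pose proof (Cnorm2_gt0 b H1). lra.
      + pose proof (Cnorm2_gt0 a Ha). lra. }
    exists (- fst b, snd b), (fst a, - snd a), (Cnorm2 a + Cnorm2 b).
    split; [exact Hpos|]. intro c.
    match goal with |- _ <= ?S =>
      replace S with ((Cnorm2 a + Cnorm2 b) * (1 + Cnorm2 c))
        by (unfold Cnorm2, Csub, Cmul; simpl; ring) end.
    pose proof (Cnorm2_ge0 c). nra.
Qed.

(** * The weighted shift in coordinates *)

Definition vadd {J} (x y : vec J) : vec J := fun j k => Cadd (x j k) (y j k).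
Definition vscal {J} (a : Cx) (x : vec J) : vec J := fun j k => Cmul a (x j k).
Definition vzero {J} : vec J := fun _ _ => C0.

Definition ebas {J} (p : J * nat) : vec J :=
  fun j k => if decide ((j, k) = p) then (1, 0) else C0.

Lemma ebas_at {J} (j : J) k : ebas (j, k) j k = (1, 0).
Proof. unfold ebas. destruct (decide _) as [_|N]; auto. exfalso; auto. Qed.

Lemma ebas_off {J} (j j' : J) k k' : (j', k') <> (j, k) -> ebas (j, k) j' k' = C0.
Proof. intro H. unfold ebas. destruct (decide _); auto. exfalso; auto. Qed.

Lemma Bop_add {J} w (x y : vec J) : Bop w (vadd x y) = vadd (Bop w x) (Bop w y).
Proof. extensionality j; extensionality k. unfold Bop, vadd. Cx_ring. Qed.

Lemma Bop_scal {J} w a (x : vec J) : Bop w (vscal a x) = vscal a (Bop w x).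
Proof. extensionality j; extensionality k. unfold Bop, vscal. Cx_ring. Qed.

Lemma iter_Bop_add {J} w n (x y : vec J) :
  Nat.iter n (Bop w) (vadd x y) = vadd (Nat.iter n (Bop w) x) (Nat.iter n (Bop w) y).
Proof. induction n as [|n IH]; simpl; [reflexivity|]. rewrite IH. apply Bop_add. Qed.

Fixpoint wprod {J} (w : J -> nat -> Cx) (j : J) (k n : nat) : Cx :=
  match n with
  | O => (1, 0)
  | S n' => Cmul (w j k) (wprod w j (S k) n')
  end.

Lemma iter_Bop_coord {J} w n : forall (x : vec J) j k,
  Nat.iter n (Bop w) x j k = Cmul (wprod w j k n) (x j (k + n)%nat).
Proof.
  induction n as [|n IH]; intros x j k; simpl.
  - rewrite Nat.add_0_r. Cx_ring.
  - unfold Bop at 1. rewrite IH. replace (S k + n)%nat with (k + S n)%nat by lia. Cx_ring.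
Qed.

Lemma iter_Bop_ebas {J} w n (j : J) k :
  Nat.iter n (Bop w) (ebas (j, (k + n)%nat)) = vscal (wprod w j k n) (ebas (j, k)).
Proof.
  extensionality a; extensionality b. rewrite iter_Bop_coord. unfold vscal, ebas.
  destruct (decide ((a, (b + n)%nat) = (j, (k + n)%nat))) as [E|E];
    destruct (decide ((a, b) = (j, k))) as [E'|E'].
  - inversion E'; subst. reflexivity.
  - exfalso. inversion E; subst. apply E'. f_equal. lia.
  - exfalso. inversion E'; subst. auto.
  - Cx_ring.
Qed.

Lemma wprod_neq0 {J} w (j : J) n : forall k,
  (forall i, (k <= i < k + n)%nat -> w j i <> C0) -> wprod w j k n <> C0.
Proof.
  induction n as [|n IH]; intros k H; simpl.
  - intro E; inversion E; lra.
  - apply Cmul_neq0; [apply H; lia|]. apply IH; intros; apply H; lia.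
Qed.

Lemma wprod_eq0 {J} w (j : J) n : forall k i,
  (k <= i < k + n)%nat -> w j i = C0 -> wprod w j k n = C0.
Proof.
  induction n as [|n IH]; intros k i Hi Hw; [lia|]. simpl. destruct (Nat.eq_dec k i).
  - subst. rewrite Hw. Cx_ring.
  - rewrite (IH (S k) i); [Cx_ring|lia|auto].
Qed.

Fixpoint coef_add (l1 l2 : list Cx) : list Cx :=
  match l1, l2 with
  | nil, _ => l2
  | _, nil => l1
  | a :: l1', b :: l2' => Cadd a b :: coef_add l1' l2'
  end.

Lemma polyB_coef_add {J} w (h : vec J) cs1 : forall cs2,
  polyB w (coef_add cs1 cs2) h = vadd (polyB w cs1 h) (polyB w cs2 h).
Proof.
  induction cs1 as [|a cs1 IH]; intros [|b cs2]; simpl;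
    extensionality j; extensionality k; unfold vadd; try Cx_ring.
  rewrite IH, Bop_add. unfold vadd. Cx_ring.
Qed.

Lemma polyB_scal {J} w (h : vec J) a cs :
  polyB w (map (Cmul a) cs) h = vscal a (polyB w cs h).
Proof.
  induction cs as [|c cs IH]; simpl; extensionality j; extensionality k.
  - unfold vscal; Cx_ring.
  - rewrite IH, Bop_scal. unfold vscal; Cx_ring.
Qed.

Lemma polyB_monomial {J} w (h : vec J) c n :
  polyB w (repeat C0 n ++ c :: nil) h = vscal c (Nat.iter n (Bop w) h).
Proof.
  induction n as [|n IH]; simpl; extensionality j; extensionality k.
  - unfold Bop, vscal; Cx_ring.
  - rewrite IH, Bop_scal. unfold vscal; Cx_ring.
Qed.

Lemma polyB_zero_weight {J} (w : J -> nat -> Cx) cs (h : vec J) j k :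
  w j k = C0 -> polyB w cs h j k = Cmul (hd C0 cs) (h j k).
Proof. intro Hw. destruct cs as [|c cs]; simpl; [Cx_ring|]. unfold Bop. rewrite Hw. Cx_ring. Qed.

Lemma psum_cons {J} (x : vec J) p L :
  psum x (p :: L) = Cnorm2 (x (fst p) (snd p)) + psum x L.
Proof. reflexivity. Qed.

Lemma psum_app {J} (x : vec J) L1 L2 : psum x (L1 ++ L2) = psum x L1 + psum x L2.
Proof. induction L1; simpl; [unfold psum; simpl; lra|]. rewrite !psum_cons, IHL1. lra. Qed.

Lemma psum_le_comb {J} (x y z : vec J) a b L :
  (forall j k, Cnorm2 (x j k) <= a * Cnorm2 (y j k) + b * Cnorm2 (z j k)) ->
  psum x L <= a * psum y L + b * psum z L.
Proof.
  intro H. induction L as [|p L IH]; [unfold psum; simpl; lra|].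
  rewrite !psum_cons. specialize (H (fst p) (snd p)). lra.
Qed.

Lemma norm2_le_weaken {J} (x : vec J) a b : a <= b -> norm2_le x a -> norm2_le x b.
Proof. intros H Hx L HL. specialize (Hx L HL). lra. Qed.

Lemma norm2_le_vzero {J} (e : R) : 0 <= e -> norm2_le (@vzero J) e.
Proof.
  intros He L _. induction L as [|p L IH]; [unfold psum; simpl; lra|].
  rewrite psum_cons. unfold vzero at 1. rewrite Cnorm2_C0. lra.
Qed.

Lemma norm2_le_vadd {J} (x z : vec J) a b :
  norm2_le x a -> norm2_le z b -> norm2_le (vadd x z) (2 * a + 2 * b).
Proof.
  intros Hx Hz L HL. specialize (Hx L HL); specialize (Hz L HL).
  pose proof (psum_le_comb (vadd x z) x z 2 2 L (fun j k => Cnorm2_add_le _ _)). lra.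
Qed.

Lemma norm2_le_vscal {J} (x : vec J) c a :
  norm2_le x a -> norm2_le (vscal c x) (Cnorm2 c * a).
Proof.
  intros Hx L HL. specialize (Hx L HL). pose proof (Cnorm2_ge0 c).
  assert (psum (vscal c x) L <= Cnorm2 c * psum x L + 0 * psum x L).
  { apply psum_le_comb. intros j k. unfold vscal. rewrite Cnorm2_mul. lra. }
  nra.
Qed.

Lemma in_l2_vadd {J} (x y : vec J) : in_l2 x -> in_l2 y -> in_l2 (vadd x y).
Proof. intros [a Ha] [b Hb]. exists (2 * a + 2 * b). apply norm2_le_vadd; auto. Qed.

Lemma in_l2_vscal {J} (x : vec J) c : in_l2 x -> in_l2 (vscal c x).
Proof. intros [a Ha]. exists (Cnorm2 c * a). apply norm2_le_vscal; auto. Qed.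

Lemma in_l2_Bop {J} (w : J -> nat -> Cx) (Mw : R) (x : vec J) :
  0 <= Mw -> (forall j k, Cnorm2 (w j k) <= Mw) -> in_l2 x -> in_l2 (Bop w x).
Proof.
  intros HMw Hw [Mx HMx]. exists (Mw * Mx). intros L HL.
  set (shift := fun p : J * nat => (fst p, S (snd p))).
  assert (Hshift : NoDup (map shift L)).
  { apply NoDup_map_NoDup_ForallPairs; auto.
    intros [a b] [c d] _ _ E. inversion E; subst; auto. }
  specialize (HMx _ Hshift).
  enough (psum (Bop w x) L <= Mw * psum x (map shift L)) by nra.
  clear HL Hshift HMx. induction L as [|p L IH]; [unfold psum; simpl; nra|].
  simpl map. rewrite !psum_cons. unfold Bop at 1. rewrite Cnorm2_mul. simpl.
  pose proof (Hw (fst p) (snd p)). pose proof (Cnorm2_ge0 (x (fst p) (S (snd p)))). nra.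
Qed.

Lemma in_l2_iter_Bop {J} (w : J -> nat -> Cx) (Mw : R) (x : vec J) n :
  0 <= Mw -> (forall j k, Cnorm2 (w j k) <= Mw) -> in_l2 x -> in_l2 (Nat.iter n (Bop w) x).
Proof. intros. induction n; simpl; auto. eapply in_l2_Bop; eauto. Qed.

Fixpoint sum_below (b : nat -> R) (K : nat) : R :=
  match K with O => 0 | S K' => sum_below b K' + b K' end.

Lemma sum_below_mono b K1 K2 :
  (forall t, 0 <= b t) -> (K1 <= K2)%nat -> sum_below b K1 <= sum_below b K2.
Proof. intros Hb H. induction H; [lra|]. simpl. specialize (Hb m). lra. Qed.

Lemma pow_half_bounds n : 0 < (/2) ^ n <= 1.
Proof. induction n; simpl; lra. Qed.

Lemma sum_below_geom_tail (b : nat -> R) (c : R) n :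
  0 <= c -> (forall t, 0 <= b t) -> (forall t, (n <= t)%nat -> b t <= c * (/2) ^ t) ->
  forall K, sum_below b K <= sum_below b n + 2 * c.
Proof.
  intros Hc Hb H K. destruct (Nat.le_gt_cases K n) as [HK|HK].
  - pose proof (sum_below_mono b K n Hb HK). lra.
  - assert (Hd : forall d, sum_below b (n + d) <= sum_below b n + 2 * c * (1 - (/2) ^ d)).
    { induction d as [|d IH]; [rewrite Nat.add_0_r; simpl; lra|].
      replace (n + S d)%nat with (S (n + d)) by lia. simpl sum_below.
      specialize (H (n + d)%nat ltac:(lia)). rewrite pow_add in H.
      pose proof (pow_half_bounds n). pose proof (pow_half_bounds d).
      assert (c * ((/2) ^ n * (/2) ^ d) <= c * (/2) ^ d) by (apply Rmult_le_compat_l; nra).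
      simpl pow. lra. }
    replace K with (n + (K - n))%nat by lia. specialize (Hd (K - n)%nat).
    pose proof (pow_half_bounds (K - n)). nra.
Qed.

Definition sumR (l : list R) : R := fold_right Rplus 0 l.

Lemma sumR_app l1 l2 : sumR (l1 ++ l2) = sumR l1 + sumR l2.
Proof. induction l1; unfold sumR in *; simpl; [lra|]. rewrite IHl1. lra. Qed.

Lemma sumR_NoDup_le_sum_below (b : nat -> R) : (forall t, 0 <= b t) -> forall K l, NoDup l ->
  (forall x, In x l -> (x < K)%nat) -> sumR (map b l) <= sum_below b K.
Proof.
  intros Hb K. induction K as [|K IH]; intros l Hl Hlt.
  - destruct l as [|x l]; [unfold sumR; simpl; lra|]. specialize (Hlt x (or_introl eq_refl)). lia.
  - simpl. destruct (in_dec Nat.eq_dec K l) as [I|I].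
    + apply in_split in I as [l1 [l2 ->]].
      assert (sumR (map b (l1 ++ l2)) <= sum_below b K).
      { apply IH; [eapply NoDup_remove_1; eauto|].
        intros x Ix. assert (x <> K) by (intro; subst; eapply NoDup_remove_2; eauto).
        enough (x < S K)%nat by lia. apply Hlt, in_or_app.
        apply in_app_or in Ix as [Ix|Ix]; auto. right; right; auto. }
      rewrite map_app, sumR_app in *. unfold sumR in *; simpl. lra.
    + assert (sumR (map b l) <= sum_below b K).
      { apply IH; auto. intros x Ix. assert (x <> K) by (intro; subst; contradiction).
        specialize (Hlt x Ix). lia. }
      specialize (Hb K). lra.
Qed.

Lemma nat_list_bound (l : list nat) : exists K, forall x, In x l -> (x < K)%nat.
Proof.
  induction l as [|a l [K HK]]; [exists O; intros x []|]. exists (S (Nat.max a K)).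
  intros x [->|I]; [lia|]. specialize (HK x I). lia.
Qed.

Lemma norm2_le_sparse {J} (v : vec J) (pi : nat -> J * nat) (b : nat -> R) (S : R) :
  (forall t, 0 <= b t) -> (forall K, sum_below b K <= S) ->
  (forall t1 t2, pi t1 = pi t2 -> t1 = t2) ->
  (forall j k, v j k <> C0 -> exists t, pi t = (j, k) /\ Cnorm2 (v j k) <= b t) ->
  norm2_le v S.
Proof.
  intros Hb HS Hpi Hv.
  assert (Hidx : forall L, NoDup L -> exists l, NoDup l /\
            (forall t, In t l -> In (pi t) L) /\ psum v L <= sumR (map b l)).
  { induction L as [|p L IH]; intros HL.
    - exists nil. repeat split; [constructor|intros t []|unfold psum, sumR; simpl; lra].
    - inversion HL; subst. destruct (IH H2) as [l [Hl [Hin Hs]]]. destruct p as [j k].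
      rewrite psum_cons; simpl. destruct (decide (v j k = C0)) as [Z|Z].
      + exists l. split; [exact Hl|split; [intros t It; right; auto|]].
        rewrite Z, Cnorm2_C0. lra.
      + destruct (Hv j k Z) as [t [Et Bt]]. exists (t :: l). repeat split.
        * constructor; auto. intro It. apply H1. rewrite <- Et. auto.
        * intros t' [<-|It']; [left|right]; auto.
        * unfold sumR in *; simpl. lra. }
  intros L HL. destruct (Hidx L HL) as [l [Hl [_ Hs]]]. destruct (nat_list_bound l) as [K HK].
  pose proof (sumR_NoDup_le_sum_below b Hb K l Hl HK). specialize (HS K). lra.
Qed.

Lemma in_l2_ebas {J} (p : J * nat) : in_l2 (ebas p).
Proof.
  exists 1. apply (norm2_le_sparse _ (fun t => (fst p, (snd p + t)%nat))
                     (fun t => if Nat.eq_dec t 0 then 1 else 0)).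
  - intro t; destruct (Nat.eq_dec t 0); lra.
  - intro K. eapply Rle_trans; [apply (sum_below_geom_tail _ 0 1)|simpl; lra];
      [lra| |]; intro t; destruct (Nat.eq_dec t 0); intros; lra || lia.
  - intros t1 t2 E. inversion E. lia.
  - intros j k H. exists O. destruct p as [j' k']. unfold ebas in *.
    destruct (decide ((j, k) = (j', k'))) as [E|E]; [|exfalso; auto].
    inversion E; subst. simpl. rewrite Nat.add_0_r. split; auto. unfold Cnorm2; simpl; lra.
Qed.

(** * Closure of an orbit *)

Definition in_orbit_closure {J} (w : J -> nat -> Cx) (h y : vec J) : Prop :=
  forall eps, 0 < eps -> exists cs, norm2_le (vsub y (polyB w cs h)) eps.

Section OrbitClosure.
Variables (J : Type) (w : J -> nat -> Cx) (h : vec J).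

Lemma orbit_closure_polyB cs : in_orbit_closure w h (polyB w cs h).
Proof.
  intros eps He. exists cs. replace (vsub _ _) with (@vzero J); [apply norm2_le_vzero; lra|].
  extensionality j; extensionality k. unfold vsub, vzero. Cx_ring.
Qed.

Lemma orbit_closure_vzero : in_orbit_closure w h vzero.
Proof. exact (orbit_closure_polyB nil). Qed.

Lemma orbit_closure_vadd y1 y2 :
  in_orbit_closure w h y1 -> in_orbit_closure w h y2 -> in_orbit_closure w h (vadd y1 y2).
Proof.
  intros H1 H2 eps He. destruct (H1 (eps / 4)) as [cs1 P1]; [lra|].
  destruct (H2 (eps / 4)) as [cs2 P2]; [lra|]. exists (coef_add cs1 cs2).
  rewrite polyB_coef_add.
  replace (vsub _ _) with (vadd (vsub y1 (polyB w cs1 h)) (vsub y2 (polyB w cs2 h))).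
  - eapply norm2_le_weaken; [|apply norm2_le_vadd; eauto]. lra.
  - extensionality j; extensionality k. unfold vsub, vadd. Cx_ring.
Qed.

Lemma orbit_closure_vscal y c : in_orbit_closure w h y -> in_orbit_closure w h (vscal c y).
Proof.
  intros H eps He. pose proof (Cnorm2_ge0 c).
  destruct (H (eps / (Cnorm2 c + 1))) as [cs P]; [apply Rdiv_lt_0_compat; lra|].
  exists (map (Cmul c) cs). rewrite polyB_scal.
  replace (vsub _ _) with (vscal c (vsub y (polyB w cs h))).
  - eapply norm2_le_weaken; [|apply norm2_le_vscal; eauto].
    apply Rle_trans with ((Cnorm2 c + 1) * (eps / (Cnorm2 c + 1))); [|right; field; lra].
    apply Rmult_le_compat_r; [apply Rlt_le, Rdiv_lt_0_compat|]; lra.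
  - extensionality j; extensionality k. unfold vsub, vscal. Cx_ring.
Qed.

Lemma orbit_closure_vsub y1 y2 :
  in_orbit_closure w h y1 -> in_orbit_closure w h y2 -> in_orbit_closure w h (vsub y1 y2).
Proof.
  intros H1 H2. replace (vsub y1 y2) with (vadd y1 (vscal (-1, 0) y2)).
  - apply orbit_closure_vadd; auto. apply orbit_closure_vscal; auto.
  - extensionality j; extensionality k. unfold vsub, vadd, vscal. Cx_ring.
Qed.

Definition truncate (y : vec J) (L : list (J * nat)) : vec J :=
  fun j k => if decide (In (j, k) L) then y j k else C0.

Lemma truncate_cons y p L :
  truncate y (p :: L) =
  vadd (truncate y L) (vscal (if decide (In p L) then C0 else y (fst p) (snd p)) (ebas p)).
Proof.
  extensionality j; extensionality k. destruct p as [j' k'].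
  unfold truncate, vadd, vscal, ebas; simpl.
  destruct (decide ((j, k) = (j', k'))) as [E|E].
  - inversion E; subst. destruct (decide ((j', k') = (j', k') \/ In (j', k') L)) as [_|N];
      [|exfalso; auto]. destruct (decide (In (j', k') L)); Cx_ring.
  - destruct (decide ((j', k') = (j, k) \/ In (j, k) L)) as [[E'|I]|N];
      [congruence| |]; destruct (decide (In (j, k) L)); try tauto; Cx_ring.
Qed.

Lemma orbit_closure_truncate y L :
  (forall j k, y j k <> C0 -> in_orbit_closure w h (ebas (j, k))) ->
  in_orbit_closure w h (truncate y L).
Proof.
  intro Hy. induction L as [|[j k] L IH].
  - replace (truncate y nil) with (@vzero J); [apply orbit_closure_vzero|].
    extensionality a; extensionality b. unfold truncate. destruct (decide _) as [[]|]; reflexivity.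
  - rewrite truncate_cons. apply orbit_closure_vadd; auto. simpl.
    destruct (decide (y j k = C0)) as [Z|Z].
    + replace (vscal _ _) with (@vzero J); [apply orbit_closure_vzero|].
      extensionality a; extensionality b. unfold vscal, vzero.
      destruct (decide _); [|rewrite Z]; Cx_ring.
    + apply orbit_closure_vscal, Hy, Z.
Qed.

Lemma psum_vsub_truncate y L L' :
  psum (vsub y (truncate y L)) L' =
  psum y (filter (fun p => if decide (In p L) then false else true) L').
Proof.
  induction L' as [|[j k] L' IH]; simpl; [reflexivity|]. rewrite psum_cons, IH.
  unfold vsub, truncate; simpl. destruct (decide (In (j, k) L)).
  - replace (Cnorm2 _) with 0 by (unfold Csub, Cnorm2; simpl; ring). lra.
  - rewrite psum_cons. simpl. f_equal. unfold Csub, C0, Cnorm2; simpl. ring.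
Qed.

(* The least upper bound of the finite partial sums is approached within [eps]
   by some [L]; everything outside [L] then has mass at most [eps]. *)
Lemma l2_truncation_small y : in_l2 y -> forall eps, 0 < eps ->
  exists L, norm2_le (vsub y (truncate y L)) eps.
Proof.
  intros [M HM] eps He.
  set (E := fun r => exists L, NoDup L /\ r = psum y L).
  destruct (completeness E) as [s [Hub Hlub]].
  - exists M. intros r [L [HL ->]]. auto.
  - exists 0, nil. split; [constructor|reflexivity].
  - assert (exists L, NoDup L /\ s - eps < psum y L) as [L [HL HLs]].
    { apply NNPP. intro N. assert (is_upper_bound E (s - eps)).
      { intros r [L [HL ->]]. apply Rnot_lt_le. intro. apply N. exists L; auto. }
      specialize (Hlub _ H). lra. }
    exists L. intros L' HL'. rewrite psum_vsub_truncate.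
    set (F := filter _ L').
    assert (HLF : NoDup (L ++ F)).
    { apply NoDup_app; auto; [apply NoDup_filter; auto|].
      intros a Ia IF. unfold F in IF. apply filter_In in IF as [_ IF].
      destruct (decide (In a L)); [discriminate|contradiction]. }
    assert (E (psum y (L ++ F))) by (exists (L ++ F); auto).
    specialize (Hub _ H). rewrite psum_app in Hub. lra.
Qed.

Lemma orbit_closure_l2 y :
  in_l2 y -> (forall j k, y j k <> C0 -> in_orbit_closure w h (ebas (j, k))) ->
  in_orbit_closure w h y.
Proof.
  intros Hl Hy eps He.
  destruct (l2_truncation_small y Hl (eps / 4)) as [L P1]; [lra|].
  destruct (orbit_closure_truncate y L Hy (eps / 4)) as [cs P2]; [lra|].
  exists cs.
  replace (vsub y (polyB w cs h))
    with (vadd (vsub y (truncate y L)) (vsub (truncate y L) (polyB w cs h))).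
  - eapply norm2_le_weaken; [|apply norm2_le_vadd; eauto]. lra.
  - extensionality j; extensionality k. unfold vsub, vadd. Cx_ring.
Qed.

Lemma cyclic_vector_of_basis :
  in_l2 h -> (forall p, in_orbit_closure w h (ebas p)) -> cyclic_vector w h.
Proof. intros Hh Hb. split; auto. intros y Hy. apply orbit_closure_l2; auto. Qed.

End OrbitClosure.

(** * The cyclic vector *)

Fixpoint prodR (f : nat -> R) (a n : nat) : R :=
  match n with O => 1 | S n' => f a * prodR f (S a) n' end.

Lemma prodR_split f n1 : forall a n2,
  prodR f a (n1 + n2) = prodR f a n1 * prodR f (a + n1) n2.
Proof.
  induction n1 as [|n1 IH]; intros a n2; simpl; [rewrite Nat.add_0_r; lra|].
  rewrite IH. replace (S a + n1)%nat with (a + S n1)%nat by lia. lra.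
Qed.

Lemma prodR_bounds f : (forall i, 0 < f i <= 1) -> forall n a, 0 < prodR f a n <= 1.
Proof.
  intros Hf n; induction n as [|n IH]; intros a; simpl; [lra|].
  specialize (Hf a); specialize (IH (S a)). split; nra.
Qed.

Section Construction.
Variables (J : Type) (enc : J -> nat) (j0 : J) (w : J -> nat -> Cx) (M : R).
Hypothesis enc_inj : forall a b : J, enc a = enc b -> a = b.
Hypothesis w_le_M : forall j k, Cnorm2 (w j k) <= M.
(* Every zero weight is w_{jz, K0 - 1}; with K0 = 0 no weight vanishes. *)
Variables (jz : J) (K0 : nat).
Hypothesis zero_weights : forall j i, w j i = C0 -> j = jz /\ S i = K0.

Definition enc_inv (a : nat) : J :=
  match decide (exists j, enc j = a) with
  | left H => proj1_sig (constructive_indefinite_description _ H)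
  | right _ => j0
  end.

Lemma enc_inv_enc j : enc_inv (enc j) = j.
Proof.
  unfold enc_inv. destruct (decide _) as [H|H]; [|exfalso; apply H; eauto].
  destruct (constructive_indefinite_description _ H); simpl; auto.
Qed.

(* Writing m = r^2 + e with e <= 2r, site m lies in row enc_inv e, so every
   row recurs infinitely often. *)
Definition site_j (m : nat) : J := enc_inv (m - Nat.sqrt m * Nat.sqrt m).

Fixpoint site_k (m : nat) : nat :=
  match m with O => K0 | S m' => (site_k m' + S m')%nat end.

Lemma site_j_often j B : exists m, (B <= m)%nat /\ site_j m = j.
Proof.
  set (r := (enc j + B + 1)%nat). exists (r * r + enc j)%nat. split; [nia|].
  unfold site_j. rewrite (Nat.sqrt_unique (r * r + enc j) r) by (unfold r; nia).
  replace (r * r + enc j - r * r)%nat with (enc j) by lia. apply enc_inv_enc.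
Qed.

Lemma site_k_ge m : (K0 + m <= site_k m)%nat.
Proof. induction m; simpl; lia. Qed.

Lemma site_k_gap m1 m2 : (m1 < m2)%nat -> (site_k m1 + m2 <= site_k m2)%nat.
Proof.
  induction m2 as [|m2 IH]; intro H; [lia|]. simpl.
  destruct (Nat.eq_dec m1 m2); [subst; lia|]. specialize (IH ltac:(lia)). lia.
Qed.

Lemma site_k_inj m1 m2 : site_k m1 = site_k m2 -> m1 = m2.
Proof.
  intro E. destruct (Nat.lt_total m1 m2) as [H|[H|H]]; auto;
    pose proof (site_k_gap _ _ H); lia.
Qed.

Definition wbound : R := Rmax 1 M.

Lemma w_le_wbound j k : Cnorm2 (w j k) <= wbound.
Proof. eapply Rle_trans; [apply w_le_M|apply Rmax_r]. Qed.

Lemma wbound_pow_ge1 n : 1 <= wbound ^ n.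
Proof. pose proof (Rmax_l 1 M). induction n; simpl; fold wbound in *; nra. Qed.

Lemma wprod_le_wbound j n : forall k, Cnorm2 (wprod w j k n) <= wbound ^ n.
Proof.
  induction n as [|n IH]; intros k; simpl; [unfold Cnorm2; simpl; lra|]. rewrite Cnorm2_mul.
  pose proof (w_le_wbound j k). pose proof (Cnorm2_ge0 (w j k)).
  pose proof (Cnorm2_ge0 (wprod w j (S k) n)). specialize (IH (S k)). nra.
Qed.

Definition wfloor (j : J) (i : nat) : R :=
  if decide (w j i = C0) then 1 else Rmin (Cnorm2 (w j i)) 1.

Lemma wfloor_bounds j i : 0 < wfloor j i <= 1.
Proof.
  unfold wfloor. destruct (decide _) as [|H]; [lra|]. pose proof (Cnorm2_gt0 _ H).
  split; [apply Rmin_glb_lt|apply Rmin_r]; lra.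
Qed.

Definition wfloor_prod (j : J) (N : nat) : R := prodR (wfloor j) 0 N.

Lemma wfloor_prod_bounds j N : 0 < wfloor_prod j N <= 1.
Proof. apply prodR_bounds, wfloor_bounds. Qed.

Lemma wfloor_prod_anti j N1 N2 : (N1 <= N2)%nat -> wfloor_prod j N2 <= wfloor_prod j N1.
Proof.
  intro H. unfold wfloor_prod. replace N2 with (N1 + (N2 - N1))%nat by lia.
  rewrite prodR_split. pose proof (prodR_bounds _ (wfloor_bounds j) N1 0).
  pose proof (prodR_bounds _ (wfloor_bounds j) (N2 - N1) (0 + N1)). nra.
Qed.

Lemma wfloor_prod_le_wprod j n : forall a,
  (forall i, (a <= i < a + n)%nat -> w j i <> C0) ->
  wfloor_prod j (a + n) <= Cnorm2 (wprod w j a n).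
Proof.
  intros a H. unfold wfloor_prod. rewrite prodR_split. simpl.
  pose proof (prodR_bounds _ (wfloor_bounds j) a 0).
  enough (prodR (wfloor j) a n <= Cnorm2 (wprod w j a n)) by
    (pose proof (prodR_bounds _ (wfloor_bounds j) n a); nra).
  clear - H. revert a H. induction n as [|n IH]; intros a H; simpl; [unfold Cnorm2; simpl; lra|].
  rewrite Cnorm2_mul. assert (wfloor j a <= Cnorm2 (w j a)).
  { unfold wfloor. destruct (decide _); [exfalso; apply (H a); auto; lia|apply Rmin_l]. }
  specialize (IH (S a) ltac:(intros; apply H; lia)).
  pose proof (wfloor_bounds j a). pose proof (prodR_bounds _ (wfloor_bounds j) n (S a)). nra.
Qed.

(* The factor
   wfloor_prod/wbound^site_k in hratio makes the later coefficients negligible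
   after dividing by a weight product starting at site m; the last factor makes
   the equations B^n x = h solvable in l^2. *)
Definition hratio (m : nat) : R :=
  (/2) ^ S m * (wfloor_prod (site_j m) (site_k m) / wbound ^ site_k m)
  * wfloor_prod (site_j (S m)) (site_k (S m) + S m).

Fixpoint hcoef2 (m : nat) : R :=
  match m with
  | O => wfloor_prod (site_j 0) K0
  | S m' => hcoef2 m' * hratio m'
  end.

Lemma wfloor_prod_div_wbound j m : 0 < wfloor_prod j (site_k m) / wbound ^ site_k m <= 1.
Proof.
  pose proof (wfloor_prod_bounds j (site_k m)). pose proof (wbound_pow_ge1 (site_k m)).
  split; [apply Rdiv_lt_0_compat; lra|].
  apply Rmult_le_reg_r with (wbound ^ site_k m); [lra|].
  unfold Rdiv. rewrite Rmult_assoc, Rinv_l; lra.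
Qed.

Lemma hratio_bounds m : 0 < hratio m <= (/2) ^ S m * wfloor_prod (site_j (S m)) (site_k (S m) + S m).
Proof.
  unfold hratio. pose proof (wfloor_prod_div_wbound (site_j m) m).
  pose proof (pow_half_bounds (S m)).
  pose proof (wfloor_prod_bounds (site_j (S m)) (site_k (S m) + S m)).
  split; [apply Rmult_lt_0_compat; [apply Rmult_lt_0_compat|]; lra|].
  apply Rmult_le_compat_r; [lra|]. rewrite <- (Rmult_1_r ((/2) ^ S m)) at 2.
  apply Rmult_le_compat_l; lra.
Qed.

Lemma hratio_le m :
  hratio m * wbound ^ site_k m <= (/2) ^ S m * wfloor_prod (site_j m) (site_k m).
Proof.
  unfold hratio. pose proof (wbound_pow_ge1 (site_k m)).
  pose proof (pow_half_bounds (S m)). pose proof (wfloor_prod_bounds (site_j m) (site_k m)).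
  pose proof (wfloor_prod_bounds (site_j (S m)) (site_k (S m) + S m)).
  replace (_ * wbound ^ site_k m)
    with ((/2) ^ S m * wfloor_prod (site_j m) (site_k m) * wfloor_prod (site_j (S m)) (site_k (S m) + S m))
    by (field; lra).
  assert (0 <= (/2) ^ S m * wfloor_prod (site_j m) (site_k m)) by (apply Rmult_le_pos; lra).
  nra.
Qed.

Lemma hcoef2_bounds m : 0 < hcoef2 m <= (/2) ^ m * wfloor_prod (site_j m) (site_k m + m).
Proof.
  destruct m as [|m]; simpl hcoef2.
  - rewrite Nat.add_0_r, pow_O, Rmult_1_l. pose proof (wfloor_prod_bounds (site_j 0) K0). simpl; lra.
  - assert (H : 0 < hcoef2 m <= 1).
    { induction m as [|m IH]; simpl hcoef2.
      - apply wfloor_prod_bounds.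
      - pose proof (hratio_bounds m). pose proof (pow_half_bounds (S m)).
        pose proof (wfloor_prod_bounds (site_j (S m)) (site_k (S m) + S m)). split; nra. }
    pose proof (hratio_bounds m). pose proof (pow_half_bounds (S m)).
    pose proof (wfloor_prod_bounds (site_j (S m)) (site_k (S m) + S m)). split; nra.
Qed.

Lemma hcoef2_pos m : 0 < hcoef2 m.
Proof. apply hcoef2_bounds. Qed.

Lemma hcoef2_succ m :
  hcoef2 (S m) * wbound ^ site_k m <= hcoef2 m * wfloor_prod (site_j m) (site_k m) * (/2) ^ S m.
Proof.
  simpl hcoef2. pose proof (hratio_le m). pose proof (hcoef2_pos m).
  rewrite Rmult_assoc. replace (hcoef2 m * wfloor_prod _ _ * _)
    with (hcoef2 m * ((/2) ^ S m * wfloor_prod (site_j m) (site_k m))) by ring.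
  apply Rmult_le_compat_l; lra.
Qed.

Lemma hcoef2_half m : hcoef2 (S m) <= hcoef2 m / 2.
Proof.
  pose proof (hcoef2_succ m). pose proof (wbound_pow_ge1 (site_k m)).
  pose proof (hcoef2_pos m). pose proof (hcoef2_pos (S m)).
  pose proof (wfloor_prod_bounds (site_j m) (site_k m)). pose proof (pow_half_bounds m).
  assert (hcoef2 (S m) <= hcoef2 (S m) * wbound ^ site_k m) by nra.
  assert (wfloor_prod (site_j m) (site_k m) * (/2) ^ m <= 1) by nra.
  simpl pow in H. nra.
Qed.

Lemma hcoef2_decay m m' : (m < m')%nat ->
  hcoef2 m' * wbound ^ site_k m <= hcoef2 m * wfloor_prod (site_j m) (site_k m) * (/2) ^ m'.
Proof.
  intro H. induction H as [|m' H IH]; [apply hcoef2_succ|].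
  pose proof (hcoef2_half m'). pose proof (wbound_pow_ge1 (site_k m)).
  simpl pow. nra.
Qed.

Definition h_sparse : vec J := fun j k =>
  match decide (exists m, site_j m = j /\ site_k m = k) with
  | left H => (sqrt (hcoef2 (proj1_sig (constructive_indefinite_description _ H))), 0)
  | right _ => C0
  end.

Lemma h_sparse_site m : h_sparse (site_j m) (site_k m) = (sqrt (hcoef2 m), 0).
Proof.
  unfold h_sparse. destruct (decide _) as [H|H]; [|exfalso; apply H; eauto].
  destruct (constructive_indefinite_description _ H) as [m' [E1 E]]; simpl.
  apply site_k_inj in E. subst; auto.
Qed.

Lemma h_sparse_support j k : h_sparse j k <> C0 -> exists m, site_j m = j /\ site_k m = k.
Proof. unfold h_sparse. destruct (decide _) as [H|H]; auto. intro N; exfalso; apply N; auto. Qed.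

Lemma h_sparse_l2 : in_l2 h_sparse.
Proof.
  exists 2. apply (norm2_le_sparse h_sparse (fun m => (site_j m, site_k m)) hcoef2).
  - intro; apply Rlt_le, hcoef2_pos.
  - intro K. eapply Rle_trans; [apply (sum_below_geom_tail _ 1 0)|simpl; lra].
    + lra.
    + intro; apply Rlt_le, hcoef2_pos.
    + intros t _. pose proof (hcoef2_bounds t).
      pose proof (wfloor_prod_bounds (site_j t) (site_k t + t)). pose proof (pow_half_bounds t). nra.
  - intros t1 t2 E. inversion E. apply site_k_inj; auto.
  - intros j k H. destruct (h_sparse_support j k H) as [m [<- <-]]. exists m. split; auto.
    rewrite h_sparse_site, Cnorm2_sqrt; [lra|apply Rlt_le, hcoef2_pos].
Qed.

Definition h_kernel : vec J := match K0 with O => vzero | S K => ebas (jz, K) end.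

Definition h_cyc : vec J := vadd h_sparse h_kernel.

Lemma h_cyc_l2 : in_l2 h_cyc.
Proof.
  apply in_l2_vadd; [apply h_sparse_l2|]. unfold h_kernel. case K0; [|intro; apply in_l2_ebas].
  exists 0. apply norm2_le_vzero; lra.
Qed.

Lemma h_cyc_far j k : (K0 <= k)%nat -> h_cyc j k = h_sparse j k.
Proof.
  unfold h_cyc, vadd, h_kernel. case K0; [intro H|intros K H].
  - unfold vzero. Cx_ring.
  - rewrite ebas_off by (intro E; inversion E; lia). Cx_ring.
Qed.


Lemma weights_off_kernel j k :
  ~ (j = jz /\ (k < K0)%nat) -> forall i, (k <= i)%nat -> w j i <> C0.
Proof. intros Hjk i Hi E. destruct (zero_weights _ _ E) as [-> HS]. apply Hjk; split; auto; lia. Qed.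

Lemma h_sparse_shift_support m k j' k' : (k < m)%nat ->
  h_sparse j' (k' + (site_k m - k))%nat <> C0 ->
  (j' = site_j m /\ k' = k) \/
  exists m', (m < m')%nat /\ site_j m' = j' /\ site_k m' = (k' + (site_k m - k))%nat.
Proof.
  intros Hk Z. destruct (h_sparse_support _ _ Z) as [m' [Hj' Hk']].
  pose proof (site_k_ge m). destruct (Nat.lt_total m' m) as [Hlt|[->|Hgt]].
  - exfalso. pose proof (site_k_gap _ _ Hlt). lia.
  - left. split; [auto|lia].
  - right. eauto.
Qed.

Lemma hcoef2_ratio_le m m' x y : (m < m')%nat ->
  wfloor_prod (site_j m) (site_k m) <= x -> 0 <= y <= wbound ^ site_k m ->
  y * hcoef2 m' / (x * hcoef2 m) <= (/2) ^ m'.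
Proof.
  intros Hm Hx Hy. pose proof (hcoef2_decay m m' Hm). pose proof (hcoef2_pos m).
  pose proof (hcoef2_pos m'). pose proof (pow_half_bounds m').
  pose proof (wfloor_prod_bounds (site_j m) (site_k m)).
  assert (Hxd : 0 < x * hcoef2 m) by nra.
  apply Rmult_le_reg_r with (x * hcoef2 m); [exact Hxd|].
  unfold Rdiv. rewrite Rmult_assoc, Rinv_l, Rmult_1_r by lra.
  assert (y * hcoef2 m' <= wbound ^ site_k m * hcoef2 m') by nra.
  assert (hcoef2 m * wfloor_prod (site_j m) (site_k m) <= hcoef2 m * x) by nra.
  assert (0 <= (/2) ^ m') by lra. nra.
Qed.

(* To reach e_{j,k}, apply c B^n with n = site_k m - k to h, where site m lies in
   row j far out: site m lands exactly on (j, k), earlier sites are shifted out,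
   and each later site m' contributes at most 2^-m'. *)
Lemma basis_off_kernel j k :
  ~ (j = jz /\ (k < K0)%nat) -> in_orbit_closure w h_cyc (ebas (j, k)).
Proof.
  intros Hjk eps He. pose proof (weights_off_kernel j k Hjk) as Hw.
  destruct (pow_lt_1_zero (/2) ltac:(rewrite Rabs_pos_eq; lra) eps He) as [N0 HN0].
  destruct (site_j_often j (Nat.max N0 (S k))) as [m [Hm Hjm]].
  pose proof (site_k_ge m) as Hsm.
  set (n := (site_k m - k)%nat). assert (Hkn : (k + n = site_k m)%nat) by (unfold n; lia).
  set (W := wprod w j k n).
  assert (HW : W <> C0) by (apply wprod_neq0; intros i Hi; apply Hw; lia).
  assert (HWlow : wfloor_prod j (site_k m) <= Cnorm2 W).
  { rewrite <- Hkn. apply wfloor_prod_le_wprod. intros i Hi; apply Hw; lia. }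
  set (s := (sqrt (hcoef2 m), 0) : Cx).
  assert (Hs : s <> C0) by (apply sqrt_neq_C0, hcoef2_pos).
  exists (repeat C0 n ++ Cinv (Cmul W s) :: nil). rewrite polyB_monomial.
  apply norm2_le_weaken with ((/2) ^ m).
  { specialize (HN0 m ltac:(lia)). rewrite Rabs_pos_eq in HN0 by (apply Rlt_le, pow_half_bounds).
    lra. }
  apply (norm2_le_sparse _ (fun t => (site_j (S m + t), (site_k (S m + t) - n)%nat))
                           (fun t => (/2) ^ (S m + t))).
  - intro t. apply Rlt_le, pow_half_bounds.
  - intro K. eapply Rle_trans; [apply (sum_below_geom_tail _ ((/2) ^ S m) 0)|simpl; lra].
    + apply Rlt_le, pow_half_bounds.
    + intro t. apply Rlt_le, pow_half_bounds.
    + intros t _. rewrite pow_add. lra.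
  - intros t1 t2 E. pose proof (f_equal snd E) as E2; cbn [snd] in E2.
    pose proof (site_k_gap m (S m + t1) ltac:(lia)). pose proof (site_k_gap m (S m + t2) ltac:(lia)).
    assert (EE : site_k (S m + t1) = site_k (S m + t2)) by lia. apply site_k_inj in EE. lia.
  - intros j' k' Hv. unfold vsub, vscal in *. rewrite iter_Bop_coord, h_cyc_far in * by lia.
    destruct (decide (h_sparse j' (k' + n)%nat = C0)) as [Z|Z].
    { exfalso. rewrite Z in Hv. destruct (decide ((j', k') = (j, k))) as [E|E].
      - inversion E; subst j' k'. rewrite Hkn, <- Hjm, h_sparse_site in Z. auto.
      - apply Hv. rewrite ebas_off by auto. Cx_ring. }
    destruct (h_sparse_shift_support m k j' k' ltac:(lia) Z) as [[-> ->]|[m' [Hmm' [<- Hk']]]].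
    { exfalso. apply Hv. rewrite <- Hjm at 1. rewrite ebas_at, Hkn, h_sparse_site, Hjm.
      fold s; fold W. rewrite <- (Cmul_Cinv (Cmul W s)) by (apply Cmul_neq0; auto). Cx_ring. }
    fold n in Hk'. exists (m' - S m)%nat. replace (S m + (m' - S m))%nat with m' by lia.
    split; [rewrite Hk'; f_equal; lia|]. pose proof (site_k_gap _ _ Hmm').
    rewrite ebas_off by (intro E; inversion E; lia).
    unfold s. rewrite <- Hk', h_sparse_site, Cnorm2_quotient by (auto; apply hcoef2_pos).
    apply hcoef2_ratio_le; [auto|rewrite Hjm; exact HWlow|split; [apply Cnorm2_ge0|]].
    eapply Rle_trans; [apply wprod_le_wbound|].
    apply Rle_pow; [pose proof (wbound_pow_ge1 1); simpl in *; lra|lia].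
Qed.

(* Below the zero weight, B^n h_cyc and B^n h_sparse differ exactly by a
   multiple of e_{jz,k}, and B^n h_sparse vanishes on the kernel block. *)
Lemma basis_in_kernel k : w jz (pred K0) = C0 -> (k < K0)%nat ->
  in_orbit_closure w h_cyc (ebas (jz, k)).
Proof.
  intros Hw0 Hk. set (n := (pred K0 - k)%nat). set (W := wprod w jz k n).
  assert (HW : W <> C0).
  { apply wprod_neq0. intros i Hi E. destruct (zero_weights _ _ E). unfold n in Hi. lia. }
  assert (Hsplit : Nat.iter n (Bop w) h_cyc =
                   vadd (Nat.iter n (Bop w) h_sparse) (vscal W (ebas (jz, k)))).
  { unfold h_cyc. rewrite iter_Bop_add. f_equal. unfold h_kernel, W, n in *.
    destruct K0 as [|K]; [lia|]. simpl pred.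
    pose proof (iter_Bop_ebas w (K - k) jz k) as E.
    replace (k + (K - k))%nat with K in E by lia. exact E. }
  assert (Hcyc : in_orbit_closure w h_cyc (Nat.iter n (Bop w) h_cyc)).
  { replace (Nat.iter n (Bop w) h_cyc) with (polyB w (repeat C0 n ++ (1, 0) :: nil) h_cyc);
      [apply orbit_closure_polyB|].
    rewrite polyB_monomial. extensionality a; extensionality b. unfold vscal. Cx_ring. }
  assert (Hsparse : in_orbit_closure w h_cyc (Nat.iter n (Bop w) h_sparse)).
  { apply orbit_closure_l2.
    - apply (in_l2_iter_Bop w wbound); [pose proof (wbound_pow_ge1 1); simpl in *; lra|
                                         apply w_le_wbound|apply h_sparse_l2].
    - intros a b Hab. apply basis_off_kernel. intros [-> Hb]. apply Hab.
      rewrite iter_Bop_coord. destruct (Nat.le_gt_cases K0 (b + n)).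
      + rewrite (wprod_eq0 w jz n b (pred K0)) by (auto; lia). Cx_ring.
      + destruct (decide (h_sparse jz (b + n)%nat = C0)) as [->|Z]; [Cx_ring|].
        destruct (h_sparse_support _ _ Z) as [m [_ Hm]]. pose proof (site_k_ge m). lia. }
  replace (ebas (jz, k))
    with (vscal (Cinv W) (vsub (Nat.iter n (Bop w) h_cyc) (Nat.iter n (Bop w) h_sparse))).
  - apply orbit_closure_vscal, orbit_closure_vsub; auto.
  - rewrite Hsplit. extensionality a; extensionality b. unfold vscal, vsub, vadd.
    pose proof (Cmul_Cinv W HW) as HWi.
    transitivity (Cmul (Cmul W (Cinv W)) (ebas (jz, k) a b)); [Cx_ring|]. rewrite HWi. Cx_ring.
Qed.

Lemma h_cyc_cyclic : (K0 = 0%nat \/ w jz (pred K0) = C0) -> cyclic_vector w h_cyc.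
Proof.
  intro Hzero. apply cyclic_vector_of_basis; [apply h_cyc_l2|]. intros [j k].
  destruct (decide (j = jz /\ (k < K0)%nat)) as [[-> Hk]|Hjk].
  - apply basis_in_kernel; auto. destruct Hzero; auto. lia.
  - apply basis_off_kernel; auto.
Qed.

Lemma h_cyc_no_kernel : K0 = 0%nat -> h_cyc = h_sparse.
Proof.
  intro E. unfold h_cyc, h_kernel. rewrite E.
  extensionality j; extensionality k. unfold vadd, vzero. Cx_ring.
Qed.

Section NoZeroWeights.
Hypothesis w_neq0 : forall j i, w j i <> C0.

Definition h_sparse_preimage (n : nat) : vec J := fun j k =>
  if Compare_dec.le_dec n k
  then Cmul (Cinv (wprod w j (k - n) n)) (h_sparse j (k - n)%nat) else C0.

Lemma iter_Bop_h_sparse_preimage n : Nat.iter n (Bop w) (h_sparse_preimage n) = h_sparse.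
Proof.
  extensionality j; extensionality k. rewrite iter_Bop_coord. unfold h_sparse_preimage.
  destruct (Compare_dec.le_dec n (k + n)) as [_|N]; [|lia].
  replace (k + n - n)%nat with k by lia.
  pose proof (Cmul_Cinv _ (wprod_neq0 w j n k (fun i _ => w_neq0 j i))) as Hi.
  transitivity (Cmul (Cmul (wprod w j k n) (Cinv (wprod w j k n))) (h_sparse j k)); [Cx_ring|].
  rewrite Hi. Cx_ring.
Qed.

Lemma h_sparse_preimage_l2 n : in_l2 (h_sparse_preimage n).
Proof.
  assert (HW : forall t, 0 < Cnorm2 (wprod w (site_j t) (site_k t) n))
    by (intro; apply Cnorm2_gt0, wprod_neq0; auto).
  set (b := fun t => hcoef2 t / Cnorm2 (wprod w (site_j t) (site_k t) n)).
  assert (Hb : forall t, 0 <= b t) by (intro t; apply Rlt_le, Rdiv_lt_0_compat; auto; apply hcoef2_pos).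
  exists (sum_below b n + 2 * 1).
  apply (norm2_le_sparse _ (fun t => (site_j t, (site_k t + n)%nat)) b); auto.
  - apply (sum_below_geom_tail b 1 n); [lra|auto|]. intros t Ht. rewrite Rmult_1_l.
    unfold b. apply Rmult_le_reg_r with (Cnorm2 (wprod w (site_j t) (site_k t) n)); [auto|].
    unfold Rdiv. rewrite Rmult_assoc, Rinv_l, Rmult_1_r by (specialize (HW t); lra).
    destruct (hcoef2_bounds t) as [_ Hd]. eapply Rle_trans; [apply Hd|].
    apply Rmult_le_compat_l; [apply Rlt_le, pow_half_bounds|].
    eapply Rle_trans; [apply wfloor_prod_anti with (N1 := (site_k t + n)%nat); lia|].
    apply wfloor_prod_le_wprod. auto.
  - intros t1 t2 E. pose proof (f_equal snd E) as E2; cbn [snd] in E2. apply site_k_inj. lia.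
  - intros j k H. unfold h_sparse_preimage in *.
    destruct (Compare_dec.le_dec n k) as [Hle|]; [|exfalso; auto].
    destruct (decide (h_sparse j (k - n)%nat = C0)) as [Z|Z].
    { exfalso. rewrite Z in H. apply H. Cx_ring. }
    destruct (h_sparse_support _ _ Z) as [m [Hj Hm]]. exists m.
    split; [rewrite Hj, Hm; f_equal; lia|].
    rewrite Cnorm2_mul, Cnorm2_Cinv by (apply wprod_neq0; auto).
    rewrite <- Hj, <- Hm, h_sparse_site, Cnorm2_sqrt by (apply Rlt_le, hcoef2_pos).
    unfold b, Rdiv. rewrite Rmult_comm. lra.
Qed.

Lemma h_sparse_in_all_ran : in_all_ran w h_sparse.
Proof.
  intros n _. exists (h_sparse_preimage n).
  split; [apply h_sparse_preimage_l2|symmetry; apply iter_Bop_h_sparse_preimage].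
Qed.

End NoZeroWeights.

End Construction.

Lemma cyclic_at_most_one_zero_weight {J} (w : J -> nat -> Cx) : cyclic w ->
  forall j1 k1 j2 k2, w j1 k1 = C0 -> w j2 k2 = C0 -> j1 = j2 /\ k1 = k2.
Proof.
  intros [h [_ Hcyc]] j1 k1 j2 k2 H1 H2. apply NNPP. intro Hne.
  assert (Hp : (j2, k2) <> (j1, k1)) by (intro E; inversion E; auto).
  destruct (Cx_pair_far_from_line (h j1 k1) (h j2 k2)) as [u [v [delta [Hd Hfar]]]].
  set (y := vadd (vscal u (ebas (j1, k1))) (vscal v (ebas (j2, k2)))).
  assert (Hy : in_l2 y) by (apply in_l2_vadd; apply in_l2_vscal, in_l2_ebas).
  destruct (Hcyc y Hy (delta / 2) ltac:(lra)) as [cs Hcs].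
  assert (ND : NoDup ((j1, k1) :: (j2, k2) :: nil)).
  { constructor; [intros [E|[]]; auto|]. constructor; [intros []|constructor]. }
  specialize (Hcs _ ND). specialize (Hfar (hd C0 cs)).
  unfold psum in Hcs; simpl in Hcs. unfold vsub, y, vadd, vscal in Hcs.
  rewrite !polyB_zero_weight, !ebas_at, !ebas_off in Hcs by auto.
  replace (Cadd (Cmul u (1, 0)) (Cmul v C0)) with u in Hcs by Cx_ring.
  replace (Cadd (Cmul u C0) (Cmul v (1, 0))) with v in Hcs by Cx_ring.
  lra.
Qed.

Theorem mainTheorem16
  (J : Type) (enc : J -> nat) (enc_inj : forall a b : J, enc a = enc b -> a = b)
  (j0 : J) (w : J -> nat -> Cx)
  (w_bdd : exists M : R, forall j k, Cnorm2 (w j k) <= M) :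
  ((forall j k, w j k <> C0) -> cyclic w) /\
  ((forall j k, w j k <> C0) ->
     (exists g : vec J, in_all_ran w g /\
        forall j N, exists k, (N <= k)%nat /\ g j k <> C0) ->
     exists h : vec J, cyclic_vector w h /\ in_all_ran w h) /\
  (cyclic w <->
     forall j1 k1 j2 k2, w j1 k1 = C0 -> w j2 k2 = C0 -> j1 = j2 /\ k1 = k2).
Proof.
  destruct w_bdd as [M HM].
  assert (no_zero : (forall j k, w j k <> C0) ->
                    exists h, cyclic_vector w h /\ in_all_ran w h).
  { intro Hnz. exists (h_sparse J enc j0 w M 0). split.
    - rewrite <- (h_cyc_no_kernel J enc j0 w M j0 0 eq_refl).
      apply h_cyc_cyclic; auto. intros j i E. exfalso; exact (Hnz j i E).
    - apply h_sparse_in_all_ran; exact Hnz. }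
  split; [|split].
  - intro Hnz. destruct (no_zero Hnz) as [h [Hh _]]. exists h; exact Hh.
  - intros Hnz _. exact (no_zero Hnz).
  - split; [apply cyclic_at_most_one_zero_weight|]. intro Hone.
    destruct (decide (exists j k, w j k = C0)) as [[jz [kz Hz]]|Hnone].
    + exists (h_cyc J enc j0 w M jz (S kz)). apply h_cyc_cyclic; auto.
      intros j i E. destruct (Hone j i jz kz E Hz). subst; auto.
    + destruct (no_zero (fun j k E => Hnone (ex_intro _ j (ex_intro _ k E)))) as [h [Hh _]].
      exists h; exact Hh.
Qed.
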